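(* Fix integers $k\ge 2$ and $1 \le t \le k/2$. Let $X$ be a set of $n$ elements with a fixed but unknown total order, and consider a $(k,t)$ scale, which on input any $k$-element subset of $X$ returns the $t$-th smallest element of that subset. Let $S$ be the set of the $t-1$ smallest elements of $X$ and $L$ the set of the $k-t$ largest elements of $X$. Then any off-line (non-adaptive) family of queries from whose results one can determine, for every possible ordering of $X$, the relative order of the elements of $X \setminus (S\cup L)$ must contain at least $$\frac{\binom{n}{k-(t-1)}}{\binom{k}{k-(t-1)}}$$ queries; in particular $\Omega(n^{k-t+1})$ queries are needed for fixed $k,t$.
   Context: A query is a $k$-element subset of $X$; the scale returns its $t$-th smallest element. In the off-line setting the whole family of queries must be specified in advance, and all results are then revealed simultaneously. *)

From mathcomp Require Import all_boot all_order all_algebra all_fingroup.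
Set Implicit Arguments. Unset Strict Implicit. Unset Printing Implicit Defensive.

(* The ground set X is 'I_n.  A (hidden) total order on X is encoded by a
   permutation sigma : {perm 'I_n}, where sigma x is the rank of x
   (0 = smallest): x is smaller than y iff sigma x < sigma y. *)

(* Answer of the (k,t) scale on query Q under ordering sigma: the t-th
   smallest element of Q, i.e. the x in Q having exactly t-1 elements of Q
   below it (None only if no such element, which cannot happen when #|Q| >= t). *)
Definition scale_answer (n t : nat) (sigma : {perm 'I_n}) (Q : {set 'I_n})
  : option 'I_n :=
  [pick x in Q | #|[set y in Q | sigma y < sigma x]| == t.-1].

(* X \ (S u L): elements of rank r with t-1 <= r < n-(k-t), where
   S = the t-1 smallest and L = the k-t largest elements. *)
Definition middle (n k t : nat) (sigma : {perm 'I_n}) : {set 'I_n} :=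
  [set x | (t.-1 <= sigma x) && (sigma x < n - (k - t))].

Definition determines_middle (n k t : nat) (F : {set {set 'I_n}}) : Prop :=
  forall sigma tau : {perm 'I_n},
    (forall Q, Q \in F -> scale_answer t sigma Q = scale_answer t tau Q) ->
    middle k t sigma = middle k t tau /\
    (forall x y, x \in middle k t sigma -> y \in middle k t sigma ->
       (sigma x < sigma y) = (tau x < tau y)).

(* If some (k-t+1)-set A lies in no query, rank the elements so that A
   occupies the top k-t+1 positions and swap its two lowest elements a and b.
   Every query then meets the complement of A in at least t elements, so each
   element of A is never the t-th smallest of a query, and the elements
   outside A keep their ranks: all answers are unchanged.  But a is in the
   middle before the swap and is the smallest element of L after it.  Hence
   the queries cover all (k-t+1)-subsets of X, and double counting gives
   #|F| * C(k, k-t+1) >= C(n, k-t+1). *)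

From mathcomp Require Import all_boot all_order all_algebra all_fingroup.
From mathcomp Require Import zify.

Set Implicit Arguments.
Unset Strict Implicit.
Unset Printing Implicit Defensive.

Lemma card_bigcup_le {I T : finType} (P : {pred I}) (G : I -> {set T}) :
  (#|\bigcup_(i in P) G i| <= \sum_(i in P) #|G i|)%N.
Proof.
elim/big_rec2: _ => [|i c U _ leUc]; first by rewrite cards0.
by rewrite (leq_trans (leq_card_setU _ U).1) ?leq_add2l.
Qed.

Lemma card_draws_le_cover (T : finType) k m (F : {set {set T}}) :
  (forall Q, Q \in F -> #|Q| = k) ->
  (forall A : {set T}, #|A| = m -> exists2 Q, Q \in F & A \subset Q) ->
  ('C(#|T|, m) <= #|F| * 'C(k, m))%N.
Proof.
move=> cardF coverF.
have draws_sub : [set A : {set T} | #|A| == m] \subset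
    \bigcup_(Q in F) [set A : {set T} | A \subset Q & #|A| == m].
  apply/subsetP => A; rewrite inE => /eqP cardA.
  have [Q QF AQ] := coverF A cardA.
  by apply/bigcupP; exists Q => //; rewrite inE AQ cardA eqxx.
rewrite -card_draws (leq_trans (subset_leq_card draws_sub)) //.
rewrite (leq_trans (card_bigcup_le _ _)) // -sum_nat_const leq_sum // => Q QF.
by rewrite cards_draws cardF.
Qed.

Lemma exists_perm_rank_top {n} (A : {set 'I_n}) :
  exists sigma : {perm 'I_n}, forall x, (x \in A) = (n - #|A| <= sigma x)%N.
Proof.
case: n A => [|n] A; first by exists 1%g => -[].
pose s := enum (~: A) ++ enum A.
have size_s : size s = n.+1 by rewrite size_cat -!cardE addnC cardsC card_ord.
have mem_s x : x \in s by rewrite mem_cat !mem_enum inE orNb.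
have index_lt x : (index x s < n.+1)%N by rewrite -[X in (_ < X)%N]size_s index_mem.
pose f x : 'I_n.+1 := inord (index x s).
have f_inj : injective f.
  move=> x y /(congr1 val); rewrite /= !inordK // => eq_index.
  by rewrite -(nth_index x (mem_s x)) eq_index nth_index.
exists (perm f_inj) => x; rewrite permE /f inordK // index_cat mem_enum inE.
have cardAC : #|~: A| = (n.+1 - #|A|)%N by have := cardsC A; rewrite card_ord; lia.
case: (boolP (x \in A)) => [xA | xNA] /=; first by rewrite -cardE cardAC leq_addr.
by apply/esym/negbTE; rewrite -ltnNge -cardAC cardE index_mem mem_enum inE.
Qed.

Section TopSwap.

Variables (n p : nat) (U : {set 'I_n}).

Definition ranks_top (sigma : {perm 'I_n}) := forall z, (z \in U) = (p <= sigma z)%N.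

Lemma card_below_top (Q : {set 'I_n}) {sigma : {perm 'I_n}} {x} :
  ranks_top sigma -> x \in U ->
  (#|Q :\: U| <= #|[set y in Q | sigma y < sigma x]|)%N.
Proof.
move=> topU xU; apply/subset_leq_card/subsetP => y; rewrite !inE => /andP[yNU ->].
by move: yNU xU; rewrite !topU; lia.
Qed.

Lemma scale_answer_top_invariant t (sigma tau : {perm 'I_n}) (Q : {set 'I_n}) :
  ranks_top sigma -> ranks_top tau -> {in ~: U, tau =1 sigma} ->
  (t.-1 < #|Q :\: U|)%N ->
  scale_answer t sigma Q = scale_answer t tau Q.
Proof.
move=> topS topT eq_out ltQU; apply: eq_pick => x /=.
case: (boolP (x \in Q)) => //= _; case: (boolP (x \in U)) => [xU | xNU].
  have count_ne rho : ranks_top rho -> (#|[set y in Q | rho y < rho x]| == t.-1) = false.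
    by move=> topR; apply/eqP; have := card_below_top Q topR xU; lia.
  by rewrite !count_ne.
suff -> : [set y in Q | tau y < tau x] = [set y in Q | sigma y < sigma x] by [].
apply/setP => y; rewrite !inE (eq_out x) ?inE //.
case: (boolP (y \in U)) => [yU | yNU]; last by rewrite eq_out ?inE.
have := yU; rewrite topT; move: yU xNU; rewrite !topS; lia.
Qed.

Lemma ranks_top_tperm (sigma : {perm 'I_n}) a b :
  a \in U -> b \in U -> ranks_top sigma -> ranks_top (tperm a b * sigma)%g.
Proof.
move=> aU bU topS z; rewrite permM -topS.
by case: tpermP => [->|->|]; rewrite ?aU ?bU.
Qed.

Lemma tperm_mul_fix_out (sigma : {perm 'I_n}) a b :
  a \in U -> b \in U -> {in ~: U, (tperm a b * sigma)%g =1 sigma}.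
Proof.
move=> aU bU z; rewrite inE permM => zNU.
by rewrite tpermD //; apply: contraNneq zNU => <-.
Qed.

End TopSwap.

Lemma determines_middle_covers n k t (F : {set {set 'I_n}}) :
  (0 < t)%N -> (t < k)%N -> (k <= n)%N ->
  (forall Q, Q \in F -> #|Q| = k) ->
  determines_middle k t F ->
  forall A : {set 'I_n}, #|A| = (k - t.-1)%N -> exists2 Q, Q \in F & A \subset Q.
Proof.
move=> t_gt0 lt_tk le_kn cardF detF A cardA.
case: (boolP [exists Q in F, A \subset Q]) => [/exists_inP[Q QF AQ] | noQ].
  by exists Q.
have [sigma topA] := exists_perm_rank_top A; rewrite cardA in topA.
set p := (n - (k - t.-1))%N in topA.
have lt_pn : (p.+1 < n)%N by rewrite /p; lia.
pose a := (sigma^-1)%g (Ordinal (ltnW lt_pn)).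
pose b := (sigma^-1)%g (Ordinal lt_pn).
have sigma_a : sigma a = p :> nat by rewrite /a permKV.
have sigma_b : sigma b = p.+1 :> nat by rewrite /b permKV.
have [aA bA] : a \in A /\ b \in A by rewrite !topA sigma_a sigma_b.
pose tau := (tperm a b * sigma)%g.
have same_answers Q : Q \in F -> scale_answer t sigma Q = scale_answer t tau Q.
  move=> QF; apply: (scale_answer_top_invariant topA).
  - exact: ranks_top_tperm aA bA topA.
  - exact: tperm_mul_fix_out aA bA.
  have QAlt : (#|Q :&: A| < #|A|)%N.
    rewrite proper_card // properEneq subsetIr andbT.
    by apply: contraNneq noQ => QAA; apply/exists_inP; exists Q => //; rewrite -QAA subsetIl.
  by have := cardsID A Q; rewrite (cardF Q QF); move: QAlt; rewrite cardA; lia.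
have [mid_eq _] := detF sigma tau same_answers.
have : a \in middle k t sigma by rewrite inE sigma_a /p; lia.
by rewrite mid_eq inE permM tpermL sigma_b /p; lia.
Qed.

Import GRing.Theory Num.Theory.
Local Open Scope ring_scope.

Theorem mainTheorem3 (n k t : nat) (hk : (2 <= k)%N) (ht1 : (1 <= t)%N)
  (ht2 : (t.*2 <= k)%N) (hkn : (k <= n)%N) (F : {set {set 'I_n}}) :
  (forall Q, Q \in F -> #|Q| = k) ->
  determines_middle k t F ->
  ('C(n, k - t.-1)%:R / 'C(k, k - t.-1)%:R : rat) <= (#|F|)%:R.
Proof.
move=> cardF detF.
have lt_tk : (t < k)%N by lia.
have := card_draws_le_cover cardF (determines_middle_covers ht1 lt_tk hkn cardF detF).
rewrite card_ord => le_binF.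
have binC_gt0 : (0 < 'C(k, k - t.-1))%N by rewrite bin_gt0 leq_subr.
by rewrite ler_pdivrMr ?ltr0n // -natrM ler_nat.
Qed.
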